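(* Let $0<q<1$, $\alpha>-1$ and let $n\ge0$ be an integer. The matrix $\left((q^{\alpha+1};q)_{j+k}\,q^{-\binom{j+k+1}{2}-\alpha(j+k)}\right)_{j,k=0}^{n}$ is invertible and its inverse is $(\gamma_{j,k})_{j,k=0}^n$ with \[ \gamma_{j,k}=\sum_{m=0}^{n}\frac{(q^{\alpha+1};q)_m\,q^{m(j+k+1)}\,(q^{-m};q)_j\,(q^{-m};q)_k\,q^{\alpha(j+k)+\binom{j+1}{2}+\binom{k+1}{2}}}{(q;q)_m\,(q;q)_j\,(q;q)_k\,(q^{\alpha+1};q)_j\,(q^{\alpha+1};q)_k}. \]
   Context: $(a;q)_m=\prod_{i=0}^{m-1}(1-aq^i)$ for integers $m\ge0$ (empty product $=1$); in particular $(q^{-m};q)_j=0$ for $j>m$. *)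

From Stdlib Require Import Reals.
Open Scope R_scope.

Fixpoint qpoch (a q : R) (m : nat) : R :=
  match m with
  | O => 1
  | S m' => qpoch a q m' * (1 - a * q ^ m')
  end.

Definition binom2 (N : nat) : R := INR N * (INR N - 1) / 2.

Definition Amat (q alpha : R) (j k : nat) : R :=
  qpoch (Rpower q (alpha + 1)) q (j + k)
  * Rpower q (- binom2 (j + k + 1) - alpha * INR (j + k)).

Definition gamma (q alpha : R) (n j k : nat) : R :=
  sum_f_R0 (fun m =>
    qpoch (Rpower q (alpha + 1)) q m * q ^ (m * (j + k + 1))
    * qpoch (/ q ^ m) q j * qpoch (/ q ^ m) q k
    * Rpower q (alpha * INR (j + k) + binom2 (j + 1) + binom2 (k + 1))
    / (qpoch q q m * qpoch q q j * qpoch q q k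
       * qpoch (Rpower q (alpha + 1)) q j * qpoch (Rpower q (alpha + 1)) q k)) n.

(* product of (n+1)x(n+1) matrices indexed 0..n *)
Definition matmul (n : nat) (A B : nat -> nat -> R) (j k : nat) : R :=
  sum_f_R0 (fun l => A j l * B l k) n.

Definition idm (j k : nat) : R := if Nat.eqb j k then 1 else 0.

From Stdlib Require Import Reals Lra Lia Wf_nat.
Open Scope R_scope.

(* A is the Gram matrix of the monomials for the functional x^s |-> mu_s.  The
   polynomials p_m(x) = sum_l B_{m,l} x^l with
     B_{m,l} = q^{ml} (q^{-m};q)_l q^{alpha l + C(l+1,2)} / ((q;q)_l (q^{alpha+1};q)_l)
   are orthogonal for it: B A B^T = diag(1/d_m), d_m = (q^{alpha+1};q)_m q^m / (q;q)_m,
   and the claimed inverse is gamma = B^T diag(d) B.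

   It then develops a small
   q-difference calculus: the weights (q^{-m};q)_l q^{ml} / (q;q)_l compute the m-th
   q-difference at 0, which annihilates polynomials in q^{-l} of degree < m and maps
   those of degree m with top coefficient c to c (q^{-1};q^{-1})_m.  Finally
   (A B^T)_{j,m} is such a q-difference of a degree-j polynomial, which yields the
   two hypotheses of the inversion lemma. *)

Lemma sum_single (f : nat -> R) N p : (p <= N)%nat ->
  (forall i, (i <= N)%nat -> i <> p -> f i = 0) -> sum_f_R0 f N = f p.
Proof.
  induction N as [|N IH]; intros Hp Hf; simpl.
  - now replace p with 0%nat by lia.
  - destruct (Nat.eq_dec p (S N)) as [->|Hne].
    + rewrite sum_eq_R0 by (intros; apply Hf; lia). ring.
    + rewrite IH, (Hf (S N)) by (try lia; intros; apply Hf; lia). ring.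
Qed.

Lemma sum_trunc (f : nat -> R) N m : (m <= N)%nat ->
  (forall i, (m < i <= N)%nat -> f i = 0) -> sum_f_R0 f N = sum_f_R0 f m.
Proof.
  induction N as [|N IH]; intros Hm Hf.
  - now replace m with 0%nat by lia.
  - destruct (Nat.eq_dec m (S N)) as [->|Hne]; [reflexivity|].
    simpl. rewrite IH, (Hf (S N)) by (try lia; intros; apply Hf; lia). ring.
Qed.

Lemma sum_swap (f : nat -> nat -> R) N M :
  sum_f_R0 (fun i => sum_f_R0 (fun k => f i k) M) N =
  sum_f_R0 (fun k => sum_f_R0 (fun i => f i k) N) M.
Proof.
  induction N as [|N IH]; simpl; [reflexivity|].
  now rewrite IH, <- plus_sum.
Qed.

Lemma sum_mult_l (f : nat -> R) c N : c * sum_f_R0 f N = sum_f_R0 (fun i => c * f i) N.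
Proof. rewrite scal_sum. apply sum_eq. intros; ring. Qed.

Definition symmetric (A : nat -> nat -> R) : Prop := forall j k, A j k = A k j.

Definition lower_triangular (B : nat -> nat -> R) : Prop :=
  forall p l, (p < l)%nat -> B p l = 0.

Lemma idm_diag j : idm j j = 1.
Proof. unfold idm. now rewrite Nat.eqb_refl. Qed.

Lemma idm_offdiag j k : j <> k -> idm j k = 0.
Proof. intros H. unfold idm. now destruct (Nat.eqb_spec j k). Qed.

Lemma matmul_assoc n A B C j k :
  matmul n (matmul n A B) C j k = matmul n A (matmul n B C) j k.
Proof.
  unfold matmul.
  rewrite (sum_eq _ (fun m => sum_f_R0 (fun l => A j l * B l m * C m k) n))
    by (intros; rewrite Rmult_comm, scal_sum; apply sum_eq; intros; ring).
  rewrite (sum_eq (fun l => A j l * _) (fun l => sum_f_R0 (fun m => A j l * B l m * C m k) n))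
    by (intros; rewrite sum_mult_l; apply sum_eq; intros; ring).
  now rewrite sum_swap.
Qed.

Lemma matmul_idm_l n A B j k : (j <= n)%nat ->
  (forall l, (l <= n)%nat -> A j l = idm j l) -> matmul n A B j k = B j k.
Proof.
  intros Hj HA. unfold matmul. rewrite (sum_single _ n j Hj).
  - now rewrite HA, idm_diag by auto; ring.
  - intros i Hi Hne. rewrite HA, idm_offdiag by auto. ring.
Qed.

Lemma matmul_idm_r n A j k : (k <= n)%nat -> matmul n A idm j k = A j k.
Proof.
  intros Hk. unfold matmul. rewrite (sum_single _ n k Hk).
  - rewrite idm_diag. ring.
  - intros i Hi Hne. rewrite idm_offdiag by auto. ring.
Qed.

Lemma matmul_symmetric n A B j k : symmetric A -> symmetric B ->
  matmul n A B j k = matmul n B A k j.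
Proof.
  intros HA HB. unfold matmul. apply sum_eq. intros l _.
  rewrite (HA j l), (HB l k). ring.
Qed.

Lemma lower_triangular_kernel n B (x : nat -> R) :
  lower_triangular B -> (forall p, (p <= n)%nat -> B p p <> 0) ->
  (forall p, (p <= n)%nat -> sum_f_R0 (fun j => B p j * x j) n = 0) ->
  forall j, (j <= n)%nat -> x j = 0.
Proof.
  intros HB Hdiag Hx j. induction j as [j IH] using lt_wf_ind. intros Hj.
  assert (Hrow : sum_f_R0 (fun i => B j i * x i) n = B j j * x j).
  { apply (sum_single (fun i => B j i * x i)); auto. intros i Hi Hne.
    destruct (Nat.lt_ge_cases j i).
    - rewrite HB by auto. ring.
    - rewrite IH by lia. ring. }
  rewrite Hx in Hrow by auto.
  destruct (Rmult_integral _ _ (eq_sym Hrow)) as [H|H]; [|exact H].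
  now destruct (Hdiag j Hj).
Qed.

Lemma lower_triangular_right_inverse n B C :
  lower_triangular B -> (forall p, (p <= n)%nat -> B p p <> 0) ->
  (forall p m, (p <= n)%nat -> (m <= n)%nat -> matmul n B C p m = idm p m) ->
  forall j k, (j <= n)%nat -> (k <= n)%nat -> matmul n C B j k = idm j k.
Proof.
  intros HB Hdiag HBC j k Hj Hk.
  enough (H : matmul n C B j k - idm j k = 0) by lra.
  revert j Hj. apply (lower_triangular_kernel n B); auto. intros p Hp.
  (* B (C B - I) = (B C) B - B = 0 *)
  rewrite (sum_eq _ (fun i => B p i * matmul n C B i k - B p i * idm i k)) by (intros; ring).
  rewrite minus_sum.
  change (matmul n B (matmul n C B) p k - matmul n B idm p k = 0).
  rewrite <- matmul_assoc, matmul_idm_l, matmul_idm_r by auto. ring.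
Qed.

(** * Inverting a matrix from an LDL^T-type factorisation *)

Lemma congruence_symmetric n A B p m : symmetric A ->
  matmul n B (matmul n A (fun l m => B m l)) p m =
  matmul n B (matmul n A (fun l m => B m l)) m p.
Proof.
  intros HA. unfold matmul.
  rewrite !(sum_eq (fun j => B _ j * _) _ n (fun j _ => sum_mult_l _ _ n)), sum_swap.
  apply sum_eq; intros i _. apply sum_eq; intros i' _. rewrite (HA i' i). ring.
Qed.

Lemma congruence_diagonal n A B :
  symmetric A -> lower_triangular B ->
  (forall j m, (j < m <= n)%nat -> matmul n A (fun l m => B m l) j m = 0) ->
  forall p m, (p <= n)%nat -> (m <= n)%nat ->
    matmul n B (matmul n A (fun l m => B m l)) p m
    = idm p m * (B m m * matmul n A (fun l m => B m l) m m).
Proof.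
  intros HA HB HG.
  assert (Hlow : forall p m, (p < m <= n)%nat ->
            matmul n B (matmul n A (fun l m => B m l)) p m = 0).
  { intros p m Hpm. apply sum_eq_R0. intros j Hj.
    destruct (Nat.lt_ge_cases p j).
    - rewrite HB by auto. ring.
    - rewrite HG by lia. ring. }
  intros p m Hp Hm. destruct (Nat.lt_trichotomy p m) as [Hlt|[<-|Hgt]].
  - rewrite Hlow, idm_offdiag by lia. ring.
  - rewrite idm_diag. unfold matmul at 1.
    rewrite (sum_single _ n p Hp); [ring|]. intros j Hj Hne.
    destruct (Nat.lt_ge_cases p j).
    + rewrite HB by auto. ring.
    + rewrite HG by lia. ring.
  - rewrite congruence_symmetric, Hlow, idm_offdiag by (auto; lia). ring.
Qed.

(* LDL^T inversion: if B A B^T = D^{-1} with B lower triangular (which the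
   hypotheses below express), then B^T D B is a two-sided inverse of A. *)
Lemma ldlt_inverse n A B (d : nat -> R) Gamma :
  symmetric A -> lower_triangular B ->
  (forall j m, (j < m <= n)%nat -> matmul n A (fun l m => B m l) j m = 0) ->
  (forall m, (m <= n)%nat -> d m * B m m * matmul n A (fun l m => B m l) m m = 1) ->
  (forall j k, Gamma j k = sum_f_R0 (fun m => B m j * d m * B m k) n) ->
  forall j k, (j <= n)%nat -> (k <= n)%nat ->
    matmul n A Gamma j k = idm j k /\ matmul n Gamma A j k = idm j k.
Proof.
  intros HA HB HG Hnorm HGamma.
  set (G := matmul n A (fun l m => B m l)) in *.
  set (C := matmul n A (fun l m => B m l * d m)).
  assert (Hdiag : forall p, (p <= n)%nat -> B p p <> 0).
  { intros p Hp H. specialize (Hnorm p Hp). rewrite H in Hnorm. lra. }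
  assert (HC : forall j m, C j m = G j m * d m).
  { intros j m. unfold C, G, matmul. rewrite Rmult_comm, sum_mult_l.
    apply sum_eq. intros; ring. }
  assert (HBC : forall p m, (p <= n)%nat -> (m <= n)%nat -> matmul n B C p m = idm p m).
  { intros p m Hp Hm.
    assert (E : matmul n B C p m = d m * matmul n B G p m).
    { unfold matmul at 1 2. rewrite sum_mult_l. apply sum_eq. intros. rewrite HC. ring. }
    rewrite E, (congruence_diagonal n A B) by auto. fold G.
    destruct (Nat.eq_dec p m) as [->|Hne].
    - rewrite idm_diag, Rmult_1_l, <- Rmult_assoc. exact (Hnorm m Hm).
    - rewrite idm_offdiag by auto. ring. }
  assert (HAGamma : forall j k, (j <= n)%nat -> (k <= n)%nat ->
            matmul n A Gamma j k = idm j k).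
  { intros j k Hj Hk.
    rewrite <- (lower_triangular_right_inverse n B C HB Hdiag HBC j k Hj Hk).
    unfold C. rewrite matmul_assoc. unfold matmul at 1 3.
    apply sum_eq. intros l _. rewrite HGamma. reflexivity. }
  assert (HGsym : symmetric Gamma).
  { intros j k. rewrite !HGamma. apply sum_eq. intros; ring. }
  intros j k Hj Hk. split; [auto|].
  rewrite matmul_symmetric, HAGamma by auto.
  unfold idm. now rewrite Nat.eqb_sym.
Qed.

Lemma qpoch_succ_l a q l : qpoch a q (S l) = (1 - a) * qpoch (a * q) q l.
Proof.
  induction l as [|l IH]; [simpl; ring|].
  change (qpoch a q (S (S l))) with (qpoch a q (S l) * (1 - a * q ^ S l)).
  rewrite IH. simpl. ring.
Qed.

Lemma qpoch_add a q l j : qpoch a q (l + j) = qpoch a q l * qpoch (a * q ^ l) q j.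
Proof.
  induction j as [|j IH]; [rewrite Nat.add_0_r; simpl; ring|].
  rewrite Nat.add_succ_r. simpl. rewrite IH, pow_add. ring.
Qed.

Lemma qpoch_vanish a q l t : (t < l)%nat -> a * q ^ t = 1 -> qpoch a q l = 0.
Proof.
  induction l as [|l IH]; intros Ht H; [lia|].
  simpl. destruct (Nat.eq_dec t l) as [->|Hne].
  - rewrite H. ring.
  - rewrite IH by (auto; lia). ring.
Qed.

Lemma qpoch_pos a q l : 0 <= q <= 1 -> 0 < a < 1 -> 0 < qpoch a q l.
Proof.
  intros Hq Ha. induction l as [|l IH]; simpl; [lra|].
  assert (0 <= q ^ l <= 1).
  { split; [apply pow_le; lra|]. rewrite <- (pow1 l). apply pow_incr. lra. }
  apply Rmult_lt_0_compat; [auto | nra].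
Qed.

(* Reversing the product: (q^{-m}; q)_m = (q^{-1}; q^{-1})_m. *)
Lemma qpoch_reversed q m : 0 < q -> qpoch (/ q ^ m) q m = qpoch (/ q) (/ q) m.
Proof.
  intros Hq. induction m as [|m IH]; [reflexivity|].
  rewrite qpoch_succ_l.
  replace (/ q ^ S m * q) with (/ q ^ m)
    by (simpl; field; split; [apply pow_nonzero|]; lra).
  rewrite IH. simpl. rewrite pow_inv.
  assert (q ^ m <> 0) by (apply pow_nonzero; lra).
  field. split; lra.
Qed.

Lemma qpoch_inv_base_sq q m : 0 < q ->
  (qpoch (/ q) (/ q) m) ^ 2 * q ^ (m * S m) = (qpoch q q m) ^ 2.
Proof.
  intros Hq. induction m as [|m IH]; [simpl; ring|].
  replace (S m * S (S m))%nat with (m * S m + (S m + S m))%nat by nia.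
  rewrite !pow_add. simpl qpoch. rewrite pow_inv.
  assert (q ^ m <> 0) by (apply pow_nonzero; lra).
  replace ((qpoch (/ q) (/ q) m * (1 - / q * / q ^ m)) ^ 2
           * (q ^ (m * S m) * (q ^ S m * q ^ S m)))
    with ((qpoch (/ q) (/ q) m) ^ 2 * q ^ (m * S m) * ((1 - / q * / q ^ m) * q ^ S m) ^ 2)
    by ring.
  rewrite IH. simpl. field. split; lra.
Qed.

(** * A q-difference calculus in the variable x = q^{-l} *)

Section QDifference.

Variable q : R.
Hypothesis q_pos : 0 < q.

Lemma qpow_neq0 l : q ^ l <> 0.
Proof. apply pow_nonzero. lra. Qed.

(* [inv_qpoly d c f]: l |-> f l is a polynomial of degree at most [d] in
   q^{-l} whose coefficient of q^{-d l} is [c] (given in Horner form). *)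
Fixpoint inv_qpoly (d : nat) (c : R) (f : nat -> R) : Prop :=
  match d with
  | O => forall l, f l = c
  | S d' => exists c0 h, inv_qpoly d' c h /\ forall l, f l = c0 + / q ^ l * h l
  end.

Lemma inv_qpoly_ext d c f g :
  inv_qpoly d c f -> (forall l, g l = f l) -> inv_qpoly d c g.
Proof.
  destruct d as [|d]; simpl; intros Hf E.
  - intros l. now rewrite E.
  - destruct Hf as [c0 [h [Hh Hf]]]. exists c0, h. split; auto.
    intros l. now rewrite E.
Qed.

Lemma inv_qpoly_lin d c1 c2 f g a b :
  inv_qpoly d c1 f -> inv_qpoly d c2 g ->
  inv_qpoly d (a * c1 + b * c2) (fun l => a * f l + b * g l).
Proof.
  revert f g. induction d as [|d IH]; simpl; intros f g Hf Hg.
  - intros l. rewrite Hf, Hg. ring.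
  - destruct Hf as [c3 [h1 [Hh1 Hf]]], Hg as [c4 [h2 [Hh2 Hg]]].
    exists (a * c3 + b * c4), (fun l => a * h1 l + b * h2 l). split.
    + now apply IH.
    + intros l. rewrite Hf, Hg. ring.
Qed.

Lemma inv_qpoly_raise d c f : inv_qpoly d c f -> inv_qpoly (S d) 0 f.
Proof.
  revert c f. induction d as [|d IH]; intros c f Hf.
  - exists c, (fun _ => 0). split; [now intros|]. intros l. rewrite Hf. ring.
  - destruct Hf as [c0 [h [Hh Hf]]]. exists c0, h. split; [eapply IH; eauto | exact Hf].
Qed.

Lemma inv_qpoly_raise_lt d m c f : inv_qpoly d c f -> (d < m)%nat -> inv_qpoly m 0 f.
Proof.
  intros Hf. induction m as [|m IH]; intros Hm; [lia|].
  destruct (Nat.eq_dec d m) as [->|Hne].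
  - eapply inv_qpoly_raise; eauto.
  - apply (inv_qpoly_raise m 0). apply IH. lia.
Qed.

Lemma inv_qpoly_shift d c f :
  inv_qpoly d c f -> inv_qpoly d (c * (/ q) ^ d) (fun l => f (S l)).
Proof.
  revert c f. induction d as [|d IH]; simpl; intros c f Hf.
  - intros l. rewrite Hf. ring.
  - destruct Hf as [c0 [h [Hh Hf]]].
    exists c0, (fun l => / q * h (S l) + 0 * h (S l)). split.
    + replace (c * (/ q * (/ q) ^ d)) with (/ q * (c * (/ q) ^ d) + 0 * (c * (/ q) ^ d))
        by ring.
      apply inv_qpoly_lin; auto.
    + intros l. rewrite Hf. simpl. field. split; [lra | apply qpow_neq0].
Qed.

Lemma inv_qpoly_mul_linear d c h b :
  inv_qpoly d c h -> inv_qpoly (S d) c (fun l => h l * (/ q ^ l - b)).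
Proof.
  revert c h. induction d as [|d IH]; intros c h Hh.
  - exists (- b * c), (fun _ => c). split; [now intros|].
    intros l. simpl in Hh. rewrite Hh. ring.
  - destruct Hh as [c0 [h' [Hh' Hh]]].
    exists (- b * c0), (fun l => 1 * c0 + 1 * (h' l * (/ q ^ l - b))). split.
    + replace c with (1 * 0 + 1 * c) by ring. apply inv_qpoly_lin; [|now apply IH].
      apply (inv_qpoly_raise_lt 0 (S d) c0); [now intros | lia].
    + intros l. rewrite Hh. ring.
Qed.

(* The q-difference operator; in the variable x = q^{-l} it maps x^i to
   (1 - q^{-i}) x^{i-1}, so it lowers the degree and scales the top coefficient. *)
Definition qdiff (f : nat -> R) (l : nat) : R := q ^ l * (f l - f (S l)).

Lemma inv_qpoly_qdiff d c f : inv_qpoly (S d) c f ->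
  inv_qpoly d (c * (1 - (/ q) ^ S d)) (qdiff f).
Proof.
  intros [c0 [h [Hh Hf]]].
  apply inv_qpoly_ext with (fun l => 1 * h l + (- / q) * h (S l)).
  - replace (c * (1 - (/ q) ^ S d)) with (1 * c + (- / q) * (c * (/ q) ^ d)) by (simpl; ring).
    apply inv_qpoly_lin; [exact Hh | now apply inv_qpoly_shift].
  - intros l. unfold qdiff. rewrite !Hf. simpl. field. split; [lra | apply qpow_neq0].
Qed.

Definition shifted_qpoch (a : R) (j l : nat) : R := qpoch (a * q ^ l) q j * (/ q ^ l) ^ j.

Lemma inv_qpoly_shifted_qpoch a j : inv_qpoly j 1 (shifted_qpoch a j).
Proof.
  induction j as [|j IH].
  - intros l. unfold shifted_qpoch. simpl. ring.
  - apply inv_qpoly_ext with (fun l => shifted_qpoch a j l * (/ q ^ l - a * q ^ j)).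
    + now apply inv_qpoly_mul_linear.
    + intros l. unfold shifted_qpoch. simpl. field. apply qpow_neq0.
Qed.

Hypothesis q_lt_1 : q < 1.

(* The weights of the iterated q-difference at l = 0, and that functional. *)
Definition qweight (m l : nat) : R := qpoch (/ q ^ m) q l * q ^ (m * l) / qpoch q q l.

Definition qdiff_at0 (m : nat) (f : nat -> R) : R :=
  sum_f_R0 (fun l => qweight m l * f l) m.

Lemma qweight_0 m : qweight m 0 = 1.
Proof. unfold qweight. rewrite Nat.mul_0_r. simpl. field. Qed.

Lemma qweight_succ m l :
  qweight (S m) (S l) = q ^ S l * qweight m (S l) - q ^ l * qweight m l.
Proof.
  unfold qweight.
  assert (HQ : 0 < qpoch q q l) by (apply qpoch_pos; lra).
  assert (Hl : 0 < q ^ l) by (apply pow_lt; lra).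
  assert (Hm : 0 < q ^ m) by (apply pow_lt; lra).
  assert (H1 : 0 < 1 - q * q ^ l).
  { assert (q ^ l <= 1) by (rewrite <- (pow1 l); apply pow_incr; lra). nra. }
  rewrite (qpoch_succ_l (/ q ^ S m)).
  replace (/ q ^ S m * q) with (/ q ^ m) by (simpl; field; lra).
  change (qpoch (/ q ^ m) q (S l)) with (qpoch (/ q ^ m) q l * (1 - / q ^ m * q ^ l)).
  change (qpoch q q (S l)) with (qpoch q q l * (1 - q * q ^ l)).
  replace (S m * S l)%nat with (m * l + m + l + 1)%nat by lia.
  replace (m * S l)%nat with (m * l + m)%nat by lia.
  rewrite !pow_add. simpl. field. repeat split; lra.
Qed.

Lemma qweight_vanish m l : (m < l)%nat -> qweight m l = 0.
Proof.
  intros H. unfold qweight. rewrite (qpoch_vanish _ q l m H); [unfold Rdiv; ring|].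
  field. apply qpow_neq0.
Qed.

Lemma qdiff_at0_succ m f : qdiff_at0 (S m) f = qdiff_at0 m (qdiff f).
Proof.
  unfold qdiff_at0, qdiff.
  rewrite decomp_sum by lia. simpl Init.Nat.pred. rewrite qweight_0.
  rewrite (sum_eq _ (fun i => q ^ S i * qweight m (S i) * f (S i)
                            - q ^ i * qweight m i * f (S i)))
    by (intros; rewrite qweight_succ; ring).
  rewrite minus_sum.
  (* reindex the first sum, using that qweight m (m+1) = 0 *)
  assert (E : sum_f_R0 (fun i => q ^ S i * qweight m (S i) * f (S i)) m
            = sum_f_R0 (fun i => q ^ i * qweight m i * f i) m - f 0%nat).
  { assert (E1 : sum_f_R0 (fun i => q ^ i * qweight m i * f i) (S m)
               = q ^ 0 * qweight m 0 * f 0%nat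
                 + sum_f_R0 (fun i => q ^ S i * qweight m (S i) * f (S i)) m)
      by (rewrite decomp_sum by lia; reflexivity).
    simpl in E1 |- *. rewrite qweight_vanish, qweight_0 in E1 by lia.
    rewrite Rmult_0_r, Rmult_0_l, Rplus_0_r, !Rmult_1_l in E1. lra. }
  rewrite E, (sum_eq (fun l => qweight m l * (q ^ l * (f l - f (S l))))
                     (fun l => q ^ l * qweight m l * f l - q ^ l * qweight m l * f (S l)))
    by (intros; ring).
  rewrite minus_sum. ring.
Qed.

Lemma qdiff_at0_top m c f :
  inv_qpoly m c f -> qdiff_at0 m f = c * qpoch (/ q) (/ q) m.
Proof.
  revert c f. induction m as [|m IH]; intros c f Hf.
  - unfold qdiff_at0. simpl. rewrite qweight_0, Hf. ring.
  - rewrite qdiff_at0_succ, (IH _ _ (inv_qpoly_qdiff m c f Hf)). simpl. ring.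
Qed.

Lemma qdiff_at0_low d m c f : inv_qpoly d c f -> (d < m)%nat -> qdiff_at0 m f = 0.
Proof.
  intros Hf Hm. rewrite (qdiff_at0_top m 0 f); [ring|].
  eapply inv_qpoly_raise_lt; eauto.
Qed.

End QDifference.

(** * The Hankel matrix of the q-moments *)

Section HankelMoments.

Variables q alpha : R.
Hypotheses (q_pos : 0 < q) (q_lt_1 : q < 1) (alpha_gt : -1 < alpha).

Definition qa : R := Rpower q (alpha + 1).

Definition moment (s : nat) : R :=
  qpoch qa q s * Rpower q (- binom2 (s + 1) - alpha * INR s).

(* Coefficient of x^l in the m-th orthogonal polynomial for these moments. *)
Definition opcoef (m l : nat) : R :=
  q ^ (m * l) * qpoch (/ q ^ m) q l * Rpower q (alpha * INR l + binom2 (l + 1))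
  / (qpoch q q l * qpoch qa q l).

(* The reciprocal of the squared norm of the m-th orthogonal polynomial. *)
Definition opweight (m : nat) : R := qpoch qa q m * q ^ m / qpoch q q m.

Definition moment_scale (j : nat) : R := Rpower q (- binom2 (j + 1) - alpha * INR j).

(* 0 < a < 1 is where alpha > -1 is used: it keeps all (a;q)_l positive. *)
Lemma qa_bounds : 0 < qa < 1.
Proof.
  unfold qa, Rpower. split; [apply exp_pos|].
  assert (ln q < 0) by (rewrite <- ln_1; apply ln_increasing; lra).
  rewrite <- exp_0 at 2. apply exp_increasing. nra.
Qed.

Lemma Amat_symmetric : symmetric (Amat q alpha).
Proof. intros j k. unfold Amat. now rewrite Nat.add_comm. Qed.

(* p_m has degree m, since (q^{-m};q)_l = 0 for l > m. *)
Lemma opcoef_lower_triangular : lower_triangular opcoef.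
Proof.
  intros m l H. unfold opcoef. rewrite (qpoch_vanish _ q l m H); [unfold Rdiv; ring|].
  field. apply pow_nonzero. lra.
Qed.

Lemma gamma_ldlt n j k :
  gamma q alpha n j k = sum_f_R0 (fun m => opcoef m j * opweight m * opcoef m k) n.
Proof.
  unfold gamma. apply sum_eq. intros m _.
  unfold opweight, opcoef. fold qa.
  destruct qa_bounds as [Ha0 Ha1].
  assert (Hq : 0 <= q <= 1) by lra.
  pose proof (qpoch_pos q q m Hq (conj q_pos q_lt_1)).
  pose proof (qpoch_pos q q j Hq (conj q_pos q_lt_1)).
  pose proof (qpoch_pos q q k Hq (conj q_pos q_lt_1)).
  pose proof (qpoch_pos qa q m Hq (conj Ha0 Ha1)).
  pose proof (qpoch_pos qa q j Hq (conj Ha0 Ha1)).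
  pose proof (qpoch_pos qa q k Hq (conj Ha0 Ha1)).
  replace (m * (j + k + 1))%nat with (m + m * j + m * k)%nat by nia.
  replace (alpha * INR (j + k) + binom2 (j + 1) + binom2 (k + 1)) with
    ((alpha * INR j + binom2 (j + 1)) + (alpha * INR k + binom2 (k + 1)))
    by (rewrite plus_INR; ring).
  rewrite !pow_add, Rpower_plus. field. lra.
Qed.

Lemma inv_pow_Rpower l j : (/ q ^ l) ^ j = Rpower q (- (INR l * INR j)).
Proof.
  rewrite Rpower_Ropp, <- mult_INR, Rpower_pow by auto.
  now rewrite pow_mult, pow_inv.
Qed.

Lemma moment_opcoef j m l :
  moment (j + l) * opcoef m l
  = qweight q m l * (moment_scale j * shifted_qpoch q qa j l).
Proof.
  unfold moment, opcoef, qweight, moment_scale, shifted_qpoch.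
  destruct qa_bounds as [Ha0 Ha1].
  assert (Hq : 0 <= q <= 1) by lra.
  pose proof (qpoch_pos q q l Hq (conj q_pos q_lt_1)).
  pose proof (qpoch_pos qa q l Hq (conj Ha0 Ha1)).
  rewrite Nat.add_comm, qpoch_add, inv_pow_Rpower.
  assert (E : Rpower q (- binom2 (l + j + 1) - alpha * INR (l + j))
              * Rpower q (alpha * INR l + binom2 (l + 1))
            = Rpower q (- binom2 (j + 1) - alpha * INR j) * Rpower q (- (INR l * INR j))).
  { rewrite <- !Rpower_plus. f_equal. unfold binom2. rewrite !plus_INR. simpl. field. }
  assert (Hpos : 0 < Rpower q (- (INR l * INR j))) by apply exp_pos.
  replace (Rpower q (- binom2 (j + 1) - alpha * INR j))
    with (Rpower q (- binom2 (l + j + 1) - alpha * INR (l + j))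
          * Rpower q (alpha * INR l + binom2 (l + 1)) / Rpower q (- (INR l * INR j)))
    by (rewrite E; field; lra).
  field. lra.
Qed.

Lemma Amat_opcoef n j m : (m <= n)%nat ->
  matmul n (Amat q alpha) (fun l m => opcoef m l) j m
  = moment_scale j * qdiff_at0 q m (shifted_qpoch q qa j).
Proof.
  intros Hm. unfold matmul, qdiff_at0.
  change (Amat q alpha j) with (fun l => moment (j + l)).
  rewrite (sum_eq _ (fun l => qweight q m l * (moment_scale j * shifted_qpoch q qa j l)))
    by (intros; apply moment_opcoef).
  rewrite (sum_trunc _ n m), sum_mult_l by
    (auto; intros; rewrite qweight_vanish by (auto; lia); ring).
  apply sum_eq. intros; ring.
Qed.

Lemma Amat_opcoef_upper n j m : (j < m <= n)%nat ->
  matmul n (Amat q alpha) (fun l m => opcoef m l) j m = 0.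
Proof.
  intros Hjm. rewrite Amat_opcoef by lia.
  rewrite (qdiff_at0_low q q_pos q_lt_1 j m 1); [ring | | lia].
  apply inv_qpoly_shifted_qpoch; auto.
Qed.

Lemma Amat_opcoef_diag n m : (m <= n)%nat ->
  opweight m * opcoef m m * matmul n (Amat q alpha) (fun l m => opcoef m l) m m = 1.
Proof.
  intros Hm. rewrite Amat_opcoef by auto.
  rewrite (qdiff_at0_top q q_pos q_lt_1 m 1) by (apply inv_qpoly_shifted_qpoch; auto).
  unfold opweight, opcoef, moment_scale. rewrite qpoch_reversed by auto.
  destruct qa_bounds as [Ha0 Ha1].
  assert (Hq : 0 <= q <= 1) by lra.
  pose proof (qpoch_pos q q m Hq (conj q_pos q_lt_1)).
  pose proof (qpoch_pos qa q m Hq (conj Ha0 Ha1)).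
  assert (Hpow : Rpower q (alpha * INR m + binom2 (m + 1))
                 * Rpower q (- binom2 (m + 1) - alpha * INR m) = 1).
  { rewrite <- Rpower_plus, <- (Rpower_O q q_pos). f_equal. ring. }
  assert (Hsq := qpoch_inv_base_sq q m q_pos).
  replace (m * S m)%nat with (m * m + m)%nat in Hsq by nia. rewrite pow_add in Hsq.
  transitivity ((qpoch (/ q) (/ q) m ^ 2 * (q ^ (m * m) * q ^ m)) / qpoch q q m ^ 2
     * (Rpower q (alpha * INR m + binom2 (m + 1)) * Rpower q (- binom2 (m + 1) - alpha * INR m))).
  - field. lra.
  - rewrite Hpow, Hsq. field. lra.
Qed.

End HankelMoments.

Theorem mainTheorem9 (q alpha : R) (n : nat) :
  0 < q -> q < 1 -> -1 < alpha ->
  forall j k : nat, (j <= n)%nat -> (k <= n)%nat ->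
    matmul n (Amat q alpha) (gamma q alpha n) j k = idm j k /\
    matmul n (gamma q alpha n) (Amat q alpha) j k = idm j k.
Proof.
  intros Hq0 Hq1 Halpha.
  apply (ldlt_inverse n (Amat q alpha) (opcoef q alpha) (opweight q alpha)).
  - apply Amat_symmetric.
  - apply opcoef_lower_triangular; auto.
  - intros j m Hjm. apply Amat_opcoef_upper; auto.
  - intros m Hm. apply Amat_opcoef_diag; auto.
  - intros j k. apply gamma_ldlt; auto.
Qed.
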